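(* Let $\mathfrak{g}$ be a complex simply-laced symmetrizable Kac–Moody algebra with index set $I$ and Cartan matrix $(a_{i,j})$, and let $\lambda$ be a dominant integral weight. Let $(i_1,\ldots,i_t)\in I^t$ with $i_p\ne i_q$ for $p\ne q$, and let $b_1,\ldots,b_t$ be nonnegative integers such that $x=f_{i_1}^{b_1}\cdots f_{i_t}^{b_t}\pi_\lambda\neq 0$. Then for every $1\le r\le t$, \[ \epsilon_{i_r}(x)=\max\Big\{0,\ b_r+\sum_{s<r} b_s a_{i_s,i_r}\Big\}, \] and $\epsilon_j(x)=0$ for every $j\in I\setminus\{i_1,\ldots,i_t\}$.
   Context: Simply laced: $a_{i,i}=2$, $a_{i,j}\in\{0,-1\}$ for $i\neq j$. $B(\lambda)$ is Kashiwara's crystal of $V(\lambda)$ with operators $e_i,f_i$ (valued in $B(\lambda)\sqcup\{0\}$) and $\epsilon_i(\pi)=\max\{n\ge0: e_i^n\pi\neq0\}$; $\pi_\lambda$ is its highest weight element. The monomial means $f_{i_t}^{b_t}$ is applied first. *)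

From HB Require Import structures.
From mathcomp Require Import all_boot all_order all_algebra.
From mathcomp Require Import boolp classical_sets reals.
Set Implicit Arguments. Unset Strict Implicit. Unset Printing Implicit Defensive.
Import Order.TTheory GRing.Theory Num.Theory.
Local Open Scope ring_scope.
Local Open Scope classical_set_scope.

Definition simply_laced_symmetrizable_GCM (I : finType) (A : I -> I -> int) :
  Prop :=
  [/\ forall i, A i i = 2,
      forall i j, i != j -> A i j = 0 \/ A i j = -1,
      forall i j, A i j = 0 -> A j i = 0 &
      exists d : I -> rat, (forall i, 0 < d i) /\
        forall i j, d i * (A i j)%:~R = d j * (A j i)%:~R].

(* A realization of the (real) weight space: h*_R = R^(I + I).               *)
(* The coroot alpha_j^vee is the coordinate functional at (inl j);           *)
(* the simple root alpha_i has coordinates (a_{j,i})_j on the inl part and   *)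
(* the unit vector e_i on the inr part (so the alpha_i are independent and   *)
(* <alpha_i, alpha_j^vee> = a_{j,i}).                                        *)
Definition weight (I : finType) (R : realType) := I + I -> R.

Definition pairing (I : finType) (R : realType) (j : I) (v : weight I R) : R :=
  v (inl j).

Definition sroot (I : finType) (R : realType) (A : I -> I -> int) (i : I)
  : weight I R :=
  fun k => match k with inl j => (A j i)%:~R | inr j => (j == i)%:R end.

Definition wadd (I : finType) (R : realType) (u v : weight I R) : weight I R :=
  fun k => u k + v k.
Definition wsub (I : finType) (R : realType) (u v : weight I R) : weight I R :=
  fun k => u k - v k.

Definition sreflect (I : finType) (R : realType) (A : I -> I -> int) (i : I)
  (v : weight I R) : weight I R :=
  fun k => v k - pairing i v * sroot R A i k.

(* Littelmann paths and root operators (Littelmann, Paths and root         *)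
(* operators, Ann. Math. 1995).  A path is a map pi : R -> h*_R (only its   *)
(* restriction to [0,1] matters; the formulas below are applied for all t). *)
Definition lspath (I : finType) (R : realType) := R -> weight I R.

Definition hfun (I : finType) (R : realType) (i : I) (p : lspath I R) (t : R) : R :=
  pairing i (p t).

Definition hmin (I : finType) (R : realType) (i : I) (p : lspath I R) : R :=
  inf [set y | exists t, 0 <= t <= 1 /\ y = hfun i p t].

(* f_i : None plays the role of 0 *)
Definition rootf (I : finType) (R : realType) (A : I -> I -> int) (i : I)
  (p : lspath I R) : option (lspath I R) :=
  let h := hfun i p in
  let m := hmin i p in
  if h 1 - m < 1 then None else
  let q := sup [set t | 0 <= t <= 1 /\ h t = m] in
  let x := inf [set t | q <= t <= 1 /\ h t = m + 1] in
  Some (fun t =>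
    if t <= q then p t
    else if t <= x then wadd (p q) (sreflect A i (wsub (p t) (p q)))
    else wsub (p t) (sroot R A i)).

Definition roote (I : finType) (R : realType) (A : I -> I -> int) (i : I)
  (p : lspath I R) : option (lspath I R) :=
  let h := hfun i p in
  let m := hmin i p in
  if m > -1 then None else
  let t1 := inf [set t | 0 <= t <= 1 /\ h t = m] in
  let t0 := sup [set t | 0 <= t <= t1 /\ h t >= m + 1] in
  Some (fun t =>
    if t <= t0 then p t
    else if t <= t1 then wadd (p t0) (sreflect A i (wsub (p t) (p t0)))
    else wadd (p t) (sroot R A i)).

Definition fpow (I : finType) (R : realType) (A : I -> I -> int) (i : I)
  (n : nat) (o : option (lspath I R)) : option (lspath I R) :=
  iter n (fun o => obind (rootf A i) o) o.
Definition epow (I : finType) (R : realType) (A : I -> I -> int) (i : I)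
  (n : nat) (o : option (lspath I R)) : option (lspath I R) :=
  iter n (fun o => obind (roote A i) o) o.

Definition epsilon_is (I : finType) (R : realType) (A : I -> I -> int) (i : I)
  (p : lspath I R) (k : int) : Prop :=
  exists n : nat, n%:Z = k /\
    epow A i n (Some p) <> None /\ epow A i n.+1 (Some p) = None.

(* highest weight path pi_lambda(t) = t lambda, for the dominant integral   *)
(* weight lambda = sum_j lambda_j Lambda_j (Lambda_j the fundamental weight  *)
(* with <Lambda_j, alpha_k^vee> = delta_jk and zero inr-part).              *)
Definition pi_hw (I : finType) (R : realType) (lam : I -> nat) : lspath I R :=
  fun t k => match k with inl j => t * (lam j)%:R | inr _ => 0 end.

(* f_{i_1}^{b_1} ... f_{i_t}^{b_t} pi_lambda  (f_{i_t}^{b_t} applied first) *)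
Definition monomial (I : finType) (R : realType) (A : I -> I -> int)
  (lam : I -> nat) (t : nat) (ii : 'I_t -> I) (b : 'I_t -> nat)
  : option (lspath I R) :=
  foldr (fun r o => fpow A (ii r) (b r) o) (Some (@pi_hw I R lam)) (enum 'I_t).

(* Every path occurring in the computation of the monomial is
   [x(u) = u lam - \sum_s g_s(u) alpha_(i_s)] on [0, 1], where [g_s = min(H_s, b_s)]
   and [H_s], the [i_s]-height just before [f_(i_s)^(b_s)] is applied, is
   nondecreasing, Lipschitz and zero at 0: the [i_s] are distinct, so the
   off-diagonal Cartan entries that enter [H_s] are <= 0.  For such a height,
   [f_i^n] merely subtracts [min(H, n) alpha_i].
   For [i = i_r] the [i]-height of [x] is [H + G - 2 min(H, b_r)] with [H = H_r] and
   [G] the contribution of the earlier neighbours of [i_r], squeezed between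
   [min(H, b_r, B)] and [B = - \sum_(s < r) b_s a_(i_s, i_r)].  Its minimum is
   [min(0, B - b_r)], and each [e_i] restores one unit of the cut, which gives
   [epsilon_i(x) = max(0, b_r - B)].  For [j] outside the [i_s], the [j]-height of
   [x] is nonnegative, so [e_j x = 0]. *)

From HB Require Import structures.
From mathcomp Require Import all_boot all_order all_algebra.
From mathcomp Require Import boolp classical_sets reals.
From mathcomp Require Import ring lra.
Import Order.TTheory GRing.Theory Num.Theory.
Local Open Scope ring_scope.
Local Open Scope classical_set_scope.
Set Implicit Arguments. Unset Strict Implicit.

Ltac case_min := repeat match goal with |- context [Num.min ?x ?y] =>
  case: (leP x y) => ? end.

(** * Monotone Lipschitz functions on [0, 1] *)

Section MonoLipschitz.
Variable R : realType.
Implicit Types (H f g : R -> R) (S : set R) (c e : R).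

Definition mono_lip H := exists L : R, 0 <= L /\
  forall s u, 0 <= s -> s <= u -> u <= 1 -> H s <= H u /\ H u - H s <= L * (u - s).

Lemma mono_lip_le H s u : mono_lip H -> 0 <= s -> s <= u -> u <= 1 -> H s <= H u.
Proof. by move=> [L [_ HL]] s0 su u1; case: (HL s u s0 su u1). Qed.

Lemma mono_lip_eq f g : mono_lip f -> (forall u, 0 <= u <= 1 -> f u = g u) -> mono_lip g.
Proof.
move=> [L [L0 HL]] fg; exists L; split => // s u s0 su u1.
have s01 : 0 <= s <= 1 by rewrite s0 (le_trans su u1).
have u01 : 0 <= u <= 1 by rewrite u1 (le_trans s0 su).
by rewrite -!fg //; apply: HL.
Qed.

Lemma mono_lip_cst c : mono_lip (fun _ => c).
Proof. by exists 0; split => // s u _ _ _; rewrite subrr mul0r lexx. Qed.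

Lemma mono_lip_linear c : 0 <= c -> mono_lip (fun u => c * u).
Proof. by move=> c0; exists c; split => // s u _ su _; rewrite ler_wpM2l // mulrBr lexx. Qed.

Lemma mono_lip_add f g : mono_lip f -> mono_lip g -> mono_lip (fun u => f u + g u).
Proof.
move=> [L [L0 HL]] [M [M0 HM]]; exists (L + M); split; first lra.
move=> s u s0 su u1; have := HL s u s0 su u1; have := HM s u s0 su u1; lra.
Qed.

Lemma mono_lip_scale c f : 0 <= c -> mono_lip f -> mono_lip (fun u => c * f u).
Proof.
move=> c0 [L [L0 HL]]; exists (c * L); split; first exact: mulr_ge0.
move=> s u s0 su u1; have [fsu dfsu] := HL s u s0 su u1.
by rewrite ler_wpM2l //= -mulrBr -mulrA ler_wpM2l.
Qed.

Lemma mono_lip_min f c : mono_lip f -> mono_lip (fun u => Num.min (f u) c).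
Proof.
move=> [L [L0 HL]]; exists L; split => // s u s0 su u1.
have [fsu dfsu] := HL s u s0 su u1.
have : 0 <= L * (u - s) by apply: mulr_ge0 => //; lra.
by case_min; split; lra.
Qed.

Lemma mono_lip_sum (T : eqType) (l : seq T) (P : pred T) (c : T -> R)
    (F : T -> R -> R) :
  (forall s, s \in l -> P s -> 0 <= c s /\ mono_lip (F s)) ->
  mono_lip (fun u => \sum_(s <- l | P s) c s * F s u).
Proof.
elim: l => [|a l IH] HF.
  by apply: (mono_lip_eq (mono_lip_cst 0)) => u _; rewrite big_nil.
have {}IH : mono_lip (fun u => \sum_(s <- l | P s) c s * F s u).
  by apply: IH => s sl Ps; apply: HF => //; rewrite inE sl orbT.
case Pa: (P a); last by apply: (mono_lip_eq IH) => u _; rewrite big_cons Pa.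
have [ca Fa] := HF a (mem_head _ _) Pa.
by apply: (mono_lip_eq (mono_lip_add (mono_lip_scale ca Fa) IH)) => u _; rewrite big_cons Pa.
Qed.

Lemma sup_le_mono_lip S H c : mono_lip H ->
  (forall u, S u -> 0 <= u <= 1 /\ H u <= c) -> S !=set0 ->
  (0 <= sup S <= 1) /\ H (sup S) <= c.
Proof.
move=> [L [L0 HL]] HS [s0 Ss0].
have supS : has_sup S by split; [exists s0 | exists 1 => u /HS [/andP[_ ?] _]].
have s0_le : s0 <= sup S by apply: sup_upper_bound.
have [/andP[s00 _] _] := HS _ Ss0.
have le1 : sup S <= 1 by apply: ge_sup; [exists s0 | move=> u /HS [/andP[_ ?] _]].
split; first by rewrite le1 (le_trans s00 s0_le).
apply/ler_addgt0Pr => d d0.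
have eps0 : 0 < d / (L + 1) by apply: divr_gt0 => //; lra.
have [s Ss close] := sup_adherent eps0 supS.
have s_le : s <= sup S by apply: sup_upper_bound.
have [/andP[s_0 _] Hsc] := HS _ Ss.
have [_ Lip] := HL s (sup S) s_0 s_le le1.
have dE : d / (L + 1) * (L + 1) = d by rewrite divfK //; apply/lt0r_neq0; lra.
have : L * (sup S - s) <= L * (d / (L + 1)) by apply: ler_wpM2l => //; lra.
nra.
Qed.

Lemma inf_ge_mono_lip S H c : mono_lip H ->
  (forall u, S u -> 0 <= u <= 1 /\ c <= H u) -> S !=set0 ->
  (0 <= inf S <= 1) /\ c <= H (inf S).
Proof.
move=> [L [L0 HL]] HS [s0 Ss0].
have infS : has_inf S by split; [exists s0 | exists 0 => u /HS [/andP[? _] _]].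
have le_s0 : inf S <= s0 := ge_inf infS.2 Ss0.
have [/andP[_ s01] _] := HS _ Ss0.
have ge0 : 0 <= inf S by apply: lb_le_inf; [exists s0 | move=> u /HS [/andP[? _] _]].
split; first by rewrite ge0 (le_trans le_s0 s01).
apply/ler_addgt0Pr => d d0.
have eps0 : 0 < d / (L + 1) by apply: divr_gt0 => //; lra.
have [s Ss close] := inf_adherent eps0 infS.
have le_s : inf S <= s := ge_inf infS.2 Ss.
have [/andP[_ s_1] Hsc] := HS _ Ss.
have [_ Lip] := HL (inf S) s ge0 le_s s_1.
have dE : d / (L + 1) * (L + 1) = d by rewrite divfK //; apply/lt0r_neq0; lra.
have : L * (s - inf S) <= L * (d / (L + 1)) by apply: ler_wpM2l => //; lra.
nra.
Qed.

Lemma sup_sublevel_mono_lip S H c e : mono_lip H ->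
  0 <= e <= 1 -> H 0 <= c -> c <= H e ->
  (forall u, S u <-> 0 <= u <= e /\ H u <= c) ->
  (0 <= sup S <= e) /\ H (sup S) = c.
Proof.
move=> HM /andP[e0 e1] H0 He HS.
have S0 : S 0 by apply/HS; rewrite lexx e0.
have [/andP[q0 _] Hq] : (0 <= sup S <= 1) /\ H (sup S) <= c.
  apply: sup_le_mono_lip => //; last by exists 0.
  by move=> u /HS [/andP[u0 ue] Hu]; rewrite u0 Hu (le_trans ue e1).
have supS : has_sup S by split; [exists 0 | exists e => u /HS [/andP[_ ?] _]].
have qe : sup S <= e by apply: ge_sup; [exists 0 | move=> u /HS [/andP[_ ?] _]].
split; first by rewrite q0 qe.
apply/eqP; rewrite eq_le Hq /=.
have [->//|qlt] := eqVneq (sup S) e.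
have {qlt}qlt : sup S < e by rewrite lt_neqAle qlt qe.
rewrite leNgt; apply/negP => Hlt.
case: HM => L [L0 HL].
pose d := c - H (sup S).
pose eta := Num.min (e - sup S) (d / (L + 1)).
have eta0 : 0 < eta.
  by rewrite lt_min subr_gt0 qlt divr_gt0 //= ?subr_gt0 //; lra.
have eta_e : eta <= e - sup S by rewrite ge_min lexx.
have eta_d : eta <= d / (L + 1) by rewrite ge_min lexx orbT.
have dE : d / (L + 1) * (L + 1) = d by rewrite divfK //; apply/lt0r_neq0; lra.
have [_ Lip] := HL (sup S) (sup S + eta) q0 ltac:(lra) ltac:(lra).
have : L * eta <= L * (d / (L + 1)) by apply: ler_wpM2l.
move=> Leta.
have S_eta : S (sup S + eta).
  by apply/HS; split; [apply/andP; split; lra | rewrite /d in dE Leta; nra].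
have := sup_upper_bound supS S_eta; lra.
Qed.

Lemma sup_level_mono_lip S H c : mono_lip H -> H 0 <= c -> c <= H 1 ->
  (forall u, S u <-> 0 <= u <= 1 /\ H u = c) ->
  (0 <= sup S <= 1) /\ H (sup S) = c.
Proof.
move=> HM H0 H1 HS.
have [/andP[t0 t1] Ht] := @sup_sublevel_mono_lip [set u | 0 <= u <= 1 /\ H u <= c]
  H c 1 HM ltac:(by rewrite ler01 lexx) H0 H1 ltac:(by []).
have St : S (sup [set u | 0 <= u <= 1 /\ H u <= c]) by apply/HS; rewrite t0 t1.
have [/andP[q0 q1] Hq] := @sup_le_mono_lip S H c HM
  ltac:(by move=> u /HS [? ->]) (ex_intro _ _ St).
split; first by rewrite q0 q1.
apply/eqP; rewrite eq_le Hq -{1}Ht; apply: mono_lip_le => //.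
apply: (sup_upper_bound _ St).
by split; [exists (sup [set u | 0 <= u <= 1 /\ H u <= c]) | exists 1 => u /HS [/andP[_ ?] _]].
Qed.

Lemma inf_level_mono_lip S H c a : mono_lip H -> 0 <= a <= 1 -> H a <= c -> c <= H 1 ->
  (forall u, S u <-> a <= u <= 1 /\ H u = c) ->
  (a <= inf S <= 1) /\ H (inf S) = c.
Proof.
move=> HM /andP[a0 a1] Ha H1 HS.
pose T := [set u | 0 <= u <= 1 /\ H u <= c].
have H0 : H 0 <= c by apply: le_trans Ha; exact: mono_lip_le.
have [/andP[t0 t1] Ht] := @sup_sublevel_mono_lip T H c 1 HM
  ltac:(by rewrite ler01 lexx) H0 H1 ltac:(by []).
have supT : has_sup T.
  by split; [exists 0; rewrite /T /= lexx ler01 | exists 1 => u [/andP[_ ?] _]].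
have aT : a <= sup T by apply: (sup_upper_bound supT); rewrite /T /= a0 a1.
have St : S (sup T) by apply/HS; rewrite aT t1.
have [_ Hi] := @inf_ge_mono_lip S H c HM
  ltac:(by move=> u /HS [/andP[au ->] ->]; rewrite (le_trans a0 au))
  (ex_intro _ _ St).
have lbS : lbound S a by move=> u /HS [/andP[]].
have iT : inf S <= sup T := ge_inf (ex_intro _ a lbS) St.
have ai : a <= inf S := lb_le_inf (ex_intro _ _ St) lbS.
have i1 : inf S <= 1 := le_trans iT t1.
split; first by rewrite ai i1.
apply/eqP; rewrite eq_le Hi andbT -Ht; apply: mono_lip_le => //.
exact: le_trans ai.
Qed.

End MonoLipschitz.

Section MinSums.
Variable R : realType.

Lemma min_addr_le (v x y fx fy : R) : 0 <= v -> 0 <= x -> 0 <= y ->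
  Num.min v x <= fx -> Num.min v y <= fy -> Num.min v (x + y) <= fx + fy.
Proof. by move=> v0 x0 y0; case_min; lra. Qed.

Lemma min_sum_le (T : eqType) (l : seq T) (P : pred T) (F X : T -> R) (v : R) :
  0 <= v -> (forall s, s \in l -> P s -> 0 <= X s /\ Num.min v (X s) <= F s) ->
  Num.min v (\sum_(s <- l | P s) X s) <= \sum_(s <- l | P s) F s.
Proof.
move=> v0; elim: l => [|a l IH] HX; first by rewrite !big_nil; case_min; lra.
have {}IH := IH (fun s sl => HX s ltac:(by rewrite inE sl orbT)).
have X_ge0 : 0 <= \sum_(s <- l | P s) X s.
  rewrite big_seq_cond; apply: sumr_ge0 => s /andP[sl Ps].
  by have [] := HX s ltac:(by rewrite inE sl orbT) Ps.
rewrite !big_cons; case Pa: (P a) => //.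
have [Xa Fa] := HX a (mem_head _ _) Pa.
exact: min_addr_le.
Qed.

End MinSums.

(** * Root operators on shifted paths *)

Section Heights.
Variables (R : realType) (I : finType) (A : I -> I -> int) (i : I).
Hypothesis Aii : A i i = 2.
Implicit Types (p : lspath I R) (g : R -> R).

Definition shifted p (p0 : lspath I R) g :=
  forall u, 0 <= u <= 1 -> forall k, p u k = p0 u k - g u * sroot R A i k.

Lemma sroot_diag : sroot R A i (inl i) = 2.
Proof. by rewrite /sroot Aii. Qed.

Lemma hfun_shifted p (p0 : lspath I R) g u : shifted p p0 g -> 0 <= u <= 1 ->
  hfun i p u = hfun i p0 u - 2 * g u.
Proof. by move=> sh u01; rewrite /hfun /pairing sh // sroot_diag mulrC. Qed.

Lemma hmin_ge p v : (forall u, 0 <= u <= 1 -> v <= hfun i p u) -> v <= hmin i p.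
Proof.
move=> lb; apply: lb_le_inf; first by exists (hfun i p 0), 0; rewrite lexx ler01.
by move=> y [u [u01 ->]]; apply: lb.
Qed.

Lemma hmin_eq p v : (forall u, 0 <= u <= 1 -> v <= hfun i p u) ->
  (exists2 u, 0 <= u <= 1 & hfun i p u = v) -> hmin i p = v.
Proof.
move=> lb [u u01 hu]; apply/eqP; rewrite eq_le hmin_ge // andbT -hu.
by apply: ge_inf; [exists v => y [w [w01 ->]]; apply: lb | exists u].
Qed.

End Heights.

Section RaisingOperator.
Variables (R : realType) (I : finType) (A : I -> I -> int) (i : I) (p0 : lspath I R).
Hypothesis Aii : A i i = 2.
Local Notation H := (hfun i p0).
Hypotheses (HM : mono_lip H) (H0 : H 0 = 0).
Implicit Types (p : lspath I R).

Lemma hmin_shifted_min p (j : nat) : j%:R <= H 1 ->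
  shifted A i p p0 (fun u => Num.min (H u) j%:R) -> hmin i p = - j%:R.
Proof.
move=> Hj sh; have hE := hfun_shifted Aii sh.
have [/andP[t0 t1] Ht] := @sup_sublevel_mono_lip _ [set u | 0 <= u <= 1 /\ H u <= j%:R]
  H j%:R 1 HM ltac:(by rewrite ler01 lexx) ltac:(by rewrite H0) Hj ltac:(by []).
set tau := sup _ in t0 t1 Ht.
apply: hmin_eq => [u u01|]; first by rewrite hE //; case_min; lra.
by exists tau; [rewrite t0 t1 | rewrite hE ?t0 ?t1 // Ht minxx; lra].
Qed.

Lemma rootf_piece_shifted p (c q x : R) :
  shifted A i p p0 (fun u => Num.min (H u) c) -> 0 <= q -> q <= x -> x <= 1 ->
  H q = c -> H x = c + 1 ->
  shifted A i (fun t => if t <= q then p t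
     else if t <= x then wadd (p q) (sreflect A i (wsub (p t) (p q)))
     else wsub (p t) (sroot R A i)) p0 (fun u => Num.min (H u) (c + 1)).
Proof.
move=> sh q0 qx x1 Hq Hx u /andP[u0 u1] k.
have q1 : q <= 1 := le_trans qx x1.
have [uq|qu] := leP u q.
  have Hu : H u <= c by rewrite -Hq; apply: mono_lip_le.
  by rewrite sh ?u0 ?u1 // !min_l //; lra.
have [ux|xu] := leP u x.
  have Hu1 : c <= H u by rewrite -Hq; apply: mono_lip_le => //; lra.
  have Hu2 : H u <= c + 1 by rewrite -Hx; apply: mono_lip_le.
  (* On [q, x] the reflection subtracts [(H u - c) alpha_i] from [p0 u - c alpha_i]. *)
  rewrite (min_l Hu2) /wadd /sreflect /wsub /pairing !sh ?u0 ?u1 ?q0 ?q1 //.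
  rewrite (min_r Hu1) Hq minxx sroot_diag //.
  rewrite /hfun /pairing in Hq Hu1 Hu2 *; rewrite Hq; ring.
have Hu : c + 1 <= H u by rewrite -Hx; apply: mono_lip_le => //; lra.
by rewrite /wsub sh ?u0 ?u1 // !min_r //; [ring | lra].
Qed.

Lemma rootf_shifted_None p (j : nat) : j%:R <= H 1 -> H 1 < j.+1%:R ->
  shifted A i p p0 (fun u => Num.min (H u) j%:R) -> rootf A i p = None.
Proof.
move=> Hj Hlt sh; rewrite /rootf (hmin_shifted_min Hj sh) (hfun_shifted Aii sh) ?ler01 ?lexx //.
by rewrite min_r // ifT //; rewrite -natr1 in Hlt; lra.
Qed.

Lemma rootf_shifted_Some p (j : nat) : j.+1%:R <= H 1 ->
  shifted A i p p0 (fun u => Num.min (H u) j%:R) ->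
  exists2 p', rootf A i p = Some p' & shifted A i p' p0 (fun u => Num.min (H u) j.+1%:R).
Proof.
rewrite -natr1 => Hj1 sh.
have Hj : j%:R <= H 1 by lra.
have hE := hfun_shifted Aii sh.
have j0 : 0 <= j%:R :> R by [].
pose Sq := [set u | 0 <= u <= 1 /\ hfun i p u = - j%:R].
have [/andP[q0 q1] Hq] : (0 <= sup Sq <= 1) /\ H (sup Sq) = j%:R.
  apply: sup_level_mono_lip => //; first by rewrite H0.
  move=> u; split => -[u01 hu]; split => //; move: hu; rewrite hE //; case_min; lra.
pose Sx := [set u | sup Sq <= u <= 1 /\ hfun i p u = - j%:R + 1].
have [/andP[qx x1] Hx] : (sup Sq <= inf Sx <= 1) /\ H (inf Sx) = j%:R + 1.
  apply: inf_level_mono_lip; rewrite ?q0 ?q1 ?Hq //; first lra.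
  move=> u; rewrite /Sx /=.
  have [/andP[qu u1]|] := boolP (sup Sq <= u <= 1); last by split => -[].
  have Hu : j%:R <= H u by rewrite -Hq; apply: mono_lip_le.
  by rewrite hE ?u1 ?(le_trans q0 qu) // min_r //; split => -[_ hu]; split => //; lra.
rewrite /rootf (hmin_shifted_min Hj sh) hE ?ler01 ?lexx // (min_r Hj) ifF; last first.
  by apply/negbTE; rewrite -leNgt; lra.
rewrite -/Sq -/Sx.
by eexists; [reflexivity | apply: rootf_piece_shifted].
Qed.

Lemma fpow_shifted_min (n : nat) :
  (n%:R <= H 1 -> exists2 p, fpow A i n (Some p0) = Some p &
     shifted A i p p0 (fun u => Num.min (H u) n%:R)) /\
  (H 1 < n%:R -> fpow A i n (Some p0) = None).
Proof.
have H1_ge0 : 0 <= H 1 by rewrite -H0; apply: mono_lip_le; rewrite ?ler01.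
elim: n => [|n [IHs IHn]].
  split=> [_|]; last by rewrite ltNge H1_ge0.
  exists p0 => // u /andP[u0 u1] k.
  have Hu : 0 <= H u by rewrite -H0; apply: mono_lip_le.
  by rewrite min_r // mul0r subr0.
rewrite /fpow iterS -/(fpow A i n (Some p0)).
split=> [Hn1|Hlt].
  have [|p -> sh] := IHs; first by apply: le_trans Hn1; rewrite ler_nat.
  exact: rootf_shifted_Some.
have [Hn|Hn] := leP n%:R (H 1); last by rewrite IHn.
by have [p -> sh] := IHs Hn; apply: rootf_shifted_None sh.
Qed.

Lemma fpow_Some_shifted (n : nat) (x : lspath I R) : fpow A i n (Some p0) = Some x ->
  n%:R <= H 1 /\ shifted A i x p0 (fun u => Num.min (H u) n%:R).
Proof.
have [Hs Hn] := fpow_shifted_min n.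
have [hn|hn] := leP n%:R (H 1); last by rewrite Hn.
by have [p -> sh] := Hs hn; case=> <-.
Qed.

End RaisingOperator.

(* [Q] is the path with its [i]-string removed: its [i]-height is [H + G], where
   [H] is the height cut by the string (of length [b]) and [G] is the contribution
   of the earlier neighbours of [i]. *)
Section LoweringOperator.
Variables (R : realType) (I : finType) (A : I -> I -> int) (i : I).
Hypothesis Aii : A i i = 2.
Variables (Q : lspath I R) (H G : R -> R) (b B : nat).
Hypotheses (HM : mono_lip H) (H0 : H 0 = 0) (Hb1 : b%:R <= H 1)
  (hQ : forall u, 0 <= u <= 1 -> hfun i Q u = H u + G u)
  (G_le : forall u, 0 <= u <= 1 -> G u <= B%:R)
  (G_ge : forall u, 0 <= u <= 1 -> Num.min (Num.min (H u) b%:R) B%:R <= G u).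
Implicit Types (P : lspath I R).

Lemma hfun_shifted_min P c : shifted A i P Q (fun u => Num.min (H u) c) ->
  forall u, 0 <= u <= 1 -> hfun i P u = H u + G u - 2 * Num.min (H u) c.
Proof. by move=> sh u u01; rewrite (hfun_shifted Aii sh) // hQ. Qed.

Lemma roote_shifted_None P (c : nat) : (c <= b)%N -> (c <= B)%N ->
  shifted A i P Q (fun u => Num.min (H u) c%:R) -> roote A i P = None.
Proof.
rewrite -!(ler_nat R) => cb cB sh.
have : 0 <= hmin i P.
  apply: hmin_ge => u u01; rewrite (hfun_shifted_min sh) //.
  by have := G_ge u01; case_min; lra.
by rewrite /roote => hm; rewrite ifT //; lra.
Qed.

Lemma roote_piece_shifted P (c t0 t1 : R) : B%:R <= c -> c < b%:R ->
  shifted A i P Q (fun u => Num.min (H u) (c + 1)) -> 0 <= t0 -> t0 <= t1 -> t1 <= 1 ->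
  H t0 = c -> H t1 = c + 1 ->
  shifted A i (fun t => if t <= t0 then P t
     else if t <= t1 then wadd (P t0) (sreflect A i (wsub (P t) (P t0)))
     else wadd (P t) (sroot R A i)) Q (fun u => Num.min (H u) c).
Proof.
move=> Bc cb sh t00 t01 t11 Ht0 Ht1 u /andP[u0 u1] k.
have t1_1 : t0 <= 1 := le_trans t01 t11.
have hQ' : forall u', 0 <= u' <= 1 -> Q u' (inl i) = H u' + G u' := hQ.
have G_B u' : 0 <= u' <= 1 -> B%:R <= H u' -> G u' = B%:R.
  move=> u01 HBu; apply/eqP; rewrite eq_le G_le //=.
  by have := G_ge u01; case_min; lra.
have [ut0|t0u] := leP u t0.
  have Hu : H u <= c by rewrite -Ht0; apply: mono_lip_le.
  by rewrite sh ?u0 ?u1 // !min_l //; lra.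
have [ut1|t1u] := leP u t1.
  have Hu1 : c <= H u by rewrite -Ht0; apply: mono_lip_le => //; lra.
  have Hu2 : H u <= c + 1 by rewrite -Ht1; apply: mono_lip_le.
  (* [G = B] is constant on [t0, t1], so the reflection adds [(H u - c) alpha_i]. *)
  rewrite (min_r Hu1) /wadd /sreflect /wsub /pairing !sh ?u0 ?u1 ?t00 ?t1_1 //.
  rewrite (min_l Hu2) Ht0 (min_l (_ : c <= c + 1)); last lra.
  have G_Bu : G u = B%:R by apply: G_B; rewrite ?u0 ?u1 //; lra.
  have G_Bt0 : G t0 = B%:R by apply: G_B; rewrite ?t00 ?t1_1 //; lra.
  rewrite sroot_diag // !hQ' ?u0 ?u1 ?t00 ?t1_1 // G_Bu G_Bt0 Ht0.
  ring.
have Hu : c + 1 <= H u by rewrite -Ht1; apply: mono_lip_le => //; lra.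
by rewrite /wadd sh ?u0 ?u1 // !min_r //; [ring | lra].
Qed.

Lemma roote_shifted_Some P (n : nat) : (B <= n)%N -> (n < b)%N ->
  shifted A i P Q (fun u => Num.min (H u) n.+1%:R) ->
  exists2 P', roote A i P = Some P' & shifted A i P' Q (fun u => Num.min (H u) n%:R).
Proof.
move=> Bn nb; rewrite -natr1 => sh.
have {Bn}Bn : B%:R <= n%:R :> R by rewrite ler_nat.
have {nb}nb : n%:R + 1 <= b%:R :> R by rewrite natr1 ler_nat.
have n0 : 0 <= n%:R :> R by [].
have hE := hfun_shifted_min sh.
pose m : R := B%:R - (n%:R + 1).
have h_eq u : 0 <= u <= 1 -> (hfun i P u = m <-> H u = n%:R + 1).
  move=> u01; rewrite hE // /m; have := G_ge u01; have := G_le u01.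
  by case_min; split; lra.
pose S1 := [set u | 0 <= u <= 1 /\ hfun i P u = m].
have [/andP[t10 t11] Ht1] : (0 <= inf S1 <= 1) /\ H (inf S1) = n%:R + 1.
  apply: inf_level_mono_lip; rewrite ?lexx ?ler01 ?H0 //; first lra.
    exact: le_trans nb Hb1.
  by move=> u; split => -[u01 hu]; split => //; apply/(h_eq u u01).
have hminE : hmin i P = m.
  apply: hmin_eq => [u u01|]; last by exists (inf S1); rewrite ?t10 ?t11 //; apply/h_eq; rewrite ?t10 ?t11.
  by rewrite hE // /m; have := G_ge u01; have := G_le u01; case_min; lra.
pose S0 := [set u | 0 <= u <= inf S1 /\ m + 1 <= hfun i P u].
have [/andP[t00 t01] Ht0] : (0 <= sup S0 <= inf S1) /\ H (sup S0) = n%:R.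
  apply: sup_sublevel_mono_lip; rewrite ?t10 ?t11 ?H0 ?Ht1 //; try lra.
  move=> u; rewrite /S0 /=.
  have [/andP[u0 ut1]|] := boolP (0 <= u <= inf S1); last by split => -[].
  have u01 : 0 <= u <= 1 by rewrite u0 (le_trans ut1 t11).
  have Hu : H u <= n%:R + 1 by rewrite -Ht1; apply: mono_lip_le.
  rewrite hE // /m; have := G_ge u01; have := G_le u01.
  by case_min; split => -[_ hu]; split => //; lra.
rewrite /roote hminE ifF; last by apply/negbTE; rewrite -leNgt /m; lra.
rewrite -/S1 -/S0.
by eexists; [reflexivity | apply: roote_piece_shifted => //; lra].
Qed.

Lemma epsilon_shifted (j : nat) P : (B + j <= b)%N ->
  shifted A i P Q (fun u => Num.min (H u) (B + j)%:R) -> epsilon_is A i P j.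
Proof.
elim: j P => [|j IH] P Bj sh.
  rewrite addn0 in Bj sh.
  by exists 0%N; rewrite /epow /= (roote_shifted_None Bj (leqnn B) sh).
rewrite addnS in Bj sh.
have [P' eP' sh'] := roote_shifted_Some (leq_addr _ _) Bj sh.
have [_ [[->] [P'_j P'_Sj]]] := IH P' (ltnW Bj) sh'.
exists j.+1; rewrite /epow [iter j.+1 _ _]iterSr [iter j.+2 _ _]iterSr /= eP'.
by split.
Qed.

End LoweringOperator.

(** * The paths of a monomial *)

Section CartanMatrix.
Variables (I : finType) (A : I -> I -> int).
Hypothesis GCM : simply_laced_symmetrizable_GCM A.

Lemma gcm_diag i : A i i = 2.
Proof. by case: GCM. Qed.

Lemma gcm_offdiag i j : i != j -> A i j = 0 \/ A i j = -1.
Proof. by case: GCM => _ offd _ _; apply: offd. Qed.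

Lemma gcm_sym i j : A i j = A j i.
Proof.
have [-> //|ij] := eqVneq i j; have ji : j != i by rewrite eq_sym.
case: GCM => _ _ zero_sym _.
case: (gcm_offdiag ij) => eij; case: (gcm_offdiag ji) => eji; rewrite eij eji //.
- by move: (zero_sym _ _ eij); rewrite eji.
- by move: (zero_sym _ _ eji); rewrite eij.
Qed.

Lemma gcm_offdiag_le0 (R : numDomainType) i j : i != j -> (A i j)%:~R <= 0 :> R.
Proof. by move=> /gcm_offdiag [] ->; rewrite ?mulrNz ?oppr_le0. Qed.

Lemma oppr_gcm_offdiag (R : numDomainType) i j : i != j ->
  - (A i j)%:~R = (A i j != 0)%:R :> R.
Proof. by move=> /gcm_offdiag [] ->; rewrite ?oppr0 ?opprK. Qed.

End CartanMatrix.

Lemma ord_neq_ltn (t : nat) (r s : 'I_t) : (s != r) = (s < r)%N || (r < s)%N.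
Proof. by rewrite -val_eqE /= neq_ltn. Qed.

Section MonomialPaths.
Variables (R : realType) (I : finType) (A : I -> I -> int) (lam : I -> nat)
  (t : nat) (ii : 'I_t -> I) (b : 'I_t -> nat).
Hypotheses (GCM : simply_laced_symmetrizable_GCM A) (ii_inj : injective ii).
Implicit Types (l : seq 'I_t) (g : 'I_t -> R -> R) (r s : 'I_t).

Lemma ii_neq r s : r != s -> ii r != ii s.
Proof. by apply: contraNneq => /ii_inj ->. Qed.

Definition pre_height l g s (u : R) : R :=
  (lam (ii s))%:R * u - \sum_(s' <- l | (s < s')%N) (A (ii s) (ii s'))%:~R * g s' u.

(* [pre_height l g s] is the [ii s]-height of the path just before [f_(ii s)^(b s)]
   is applied; that operator cuts it at [b s], which produces [g s]. *)
Definition monomial_form l (p : lspath I R) g :=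
  (forall u, 0 <= u <= 1 -> forall k,
      p u k = @pi_hw I R lam u k - \sum_(s <- l) g s u * sroot R A (ii s) k) /\
  (forall s, s \in l -> [/\ mono_lip (pre_height l g s), pre_height l g s 0 = 0,
       (b s)%:R <= pre_height l g s 1
     & forall u, g s u = Num.min (pre_height l g s u) (b s)%:R]).

Lemma monomial_form_coef l p g s : monomial_form l p g -> s \in l ->
  [/\ mono_lip (g s), g s 0 = 0 & forall u, 0 <= u <= 1 -> 0 <= g s u <= (b s)%:R].
Proof.
move=> [_ coef] sl; have [HM H0 _ gE] := coef s sl.
split.
- by apply: (mono_lip_eq (mono_lip_min (b s)%:R HM)) => u _; rewrite gE.
- by rewrite gE H0 min_l.
- move=> u /andP[u0 u1]; rewrite gE.
  have : 0 <= pre_height l g s u by rewrite -H0; apply: mono_lip_le.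
  by have : 0 <= (b s)%:R :> R by []; case_min => *; apply/andP; split; lra.
Qed.

Lemma eq_pre_height l g1 g2 s :
  (forall s', s' \in l -> (s < s')%N -> g1 s' = g2 s') ->
  pre_height l g1 s = pre_height l g2 s.
Proof.
move=> g12; apply/funext => u; congr (_ - _).
by rewrite big_seq_cond [RHS]big_seq_cond; apply: eq_bigr => s' /andP[? ?]; rewrite g12.
Qed.

Lemma pre_height_cons l g r s : ~~ (s < r)%N ->
  pre_height (r :: l) g s = pre_height l g s.
Proof. by move=> /negbTE sr; apply/funext => u; rewrite /pre_height big_cons sr. Qed.

Section Cons.
Variables (l : seq 'I_t) (p : lspath I R) (g : 'I_t -> R -> R) (r : 'I_t).
Hypotheses (Hp : monomial_form l p g) (r_lt : forall s, s \in l -> (r < s)%N).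

Lemma pre_height_consE u : pre_height (r :: l) g r u =
  (lam (ii r))%:R * u + \sum_(s <- l) (- (A (ii r) (ii s))%:~R) * g s u.
Proof.
rewrite /pre_height big_cons ltnn big_seq_cond [in RHS]big_seq -sumrN.
rewrite (eq_bigl (fun s => s \in l)); last by move=> s; case sl: (s \in l) => //=; apply: r_lt.
by congr (_ + _); apply: eq_bigr => s _; rewrite mulNr.
Qed.

Lemma hfun_monomial_form u : 0 <= u <= 1 ->
  hfun (ii r) p u = pre_height (r :: l) g r u.
Proof.
move=> u01; rewrite pre_height_consE /hfun /pairing (proj1 Hp) // /pi_hw /sroot.
rewrite mulrC -sumrN; congr (_ + _); apply: eq_bigr => s _.
by rewrite mulNr mulrC.
Qed.

Lemma mono_lip_pre_height : mono_lip (pre_height (r :: l) g r).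
Proof.
apply: (mono_lip_eq _ (fun u _ => esym (pre_height_consE u))).
apply: mono_lip_add.
  exact: (mono_lip_linear (ler0n R _)).
apply: (mono_lip_sum (P := predT)) => s sl _; split.
  rewrite oppr_ge0; apply: (gcm_offdiag_le0 GCM); apply: ii_neq.
  by rewrite neq_ltn r_lt.
by have [] := monomial_form_coef Hp sl.
Qed.

Lemma pre_height0 : pre_height (r :: l) g r 0 = 0.
Proof.
rewrite pre_height_consE mulr0 add0r big_seq big1 // => s sl.
by have [_ -> _] := monomial_form_coef Hp sl; rewrite mulr0.
Qed.

Lemma monomial_form_cons (x : lspath I R) :
  fpow A (ii r) (b r) (Some p) = Some x ->
  monomial_form (r :: l) x
    (fun s => if s == r then (fun u => Num.min (pre_height (r :: l) g r u) (b r)%:R)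
              else g s).
Proof.
set g' := fun s => if s == r then _ else _ => fpow_x.
have r_l : r \notin l by apply/negP => /r_lt; rewrite ltnn.
have g'_l s : s \in l -> g' s = g s.
  by rewrite /g'; case: eqP => // -> rl; rewrite rl in r_l.
have ph_r : pre_height (r :: l) g' r = pre_height (r :: l) g r.
  apply: eq_pre_height => s; rewrite inE => /orP[/eqP -> | /g'_l //]; by rewrite ltnn.
have ph_l s : s \in l -> pre_height (r :: l) g' s = pre_height l g s.
  move=> sl; rewrite pre_height_cons; last by rewrite -leqNgt; apply/ltnW/r_lt.
  by apply: eq_pre_height => s' s'l _; apply: g'_l.
have HM := mono_lip_pre_height.
have hE := hfun_monomial_form.
have [Hb1 sh] := fpow_Some_shifted (gcm_diag GCM (ii r))
  (mono_lip_eq HM (fun u u01 => esym (hE u u01)))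
  ltac:(by rewrite hE ?lexx ?ler01 // pre_height0) fpow_x.
split.
  move=> u u01 k.
  have sum_g' : \sum_(s <- l) g' s u * sroot R A (ii s) k =
                \sum_(s <- l) g s u * sroot R A (ii s) k.
    by rewrite big_seq [RHS]big_seq; apply: eq_bigr => s sl; rewrite g'_l.
  by rewrite sh // (proj1 Hp) // big_cons sum_g' /g' eqxx hE //; ring.
move=> s; rewrite inE => /orP[/eqP -> | sl].
  rewrite hE ?lexx ?ler01 // in Hb1.
  by rewrite /g' eqxx ph_r; split=> //; apply: pre_height0.
by rewrite g'_l // ph_l //; apply: (proj2 Hp).
Qed.

End Cons.

Lemma fpow_None (i : I) n : fpow A i n (None : option (lspath I R)) = None.
Proof. by elim: n => //= n ->. Qed.

Lemma monomial_form_foldr l (x : lspath I R) : sorted (fun r s => (r < s)%N) l ->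
  foldr (fun r o => fpow A (ii r) (b r) o) (Some (@pi_hw I R lam)) l = Some x ->
  exists g, monomial_form l x g.
Proof.
elim: l x => [|r l IH] x /=.
  by move=> _ [<-]; exists (fun _ _ => 0); split => // u _ k; rewrite big_nil subr0.
move=> sorted_rl.
have r_lt : forall s, s \in l -> (r < s)%N.
  by apply/allP; apply: order_path_min sorted_rl; apply: ltn_trans.
case Ep: (foldr _ _ l) => [p|]; last by rewrite fpow_None.
have [g Hp] := IH p (path_sorted sorted_rl) Ep.
by move=> fpow_x; eexists; exact: (monomial_form_cons Hp r_lt fpow_x).
Qed.

End MonomialPaths.

(** * The string lengths of a monomial *)

Section EpsilonOfMonomial.
Variables (R : realType) (I : finType) (A : I -> I -> int) (lam : I -> nat)
  (t : nat) (ii : 'I_t -> I) (b : 'I_t -> nat).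
Hypotheses (GCM : simply_laced_symmetrizable_GCM A) (ii_inj : injective ii).
Variables (x : lspath I R) (g : 'I_t -> R -> R).
Hypothesis Hx : monomial_form A lam ii b (enum 'I_t) x g.
Implicit Types (r s : 'I_t).

Definition complement_path r : lspath I R := fun u k =>
  @pi_hw I R lam u k - \sum_(s <- enum 'I_t | s != r) g s u * sroot R A (ii s) k.

Definition earlier_height r (u : R) : R :=
  \sum_(s <- enum 'I_t | (s < r)%N) (A (ii r) (ii s) != 0)%:R * g s u.

Definition earlier_weight r : nat :=
  \sum_(s <- enum 'I_t | (s < r)%N) b s * (A (ii r) (ii s) != 0).

Lemma shifted_complement r : shifted A (ii r) x (complement_path r)
  (fun u => Num.min (pre_height A lam ii (enum 'I_t) g r u) (b r)%:R).
Proof.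
move=> u u01 k; have [_ _ _ gE] := (proj2 Hx) r (mem_enum _ r).
rewrite (proj1 Hx) // (bigD1_seq r (mem_enum _ r) (enum_uniq _)) /= gE.
by rewrite /complement_path; ring.
Qed.

Lemma hfun_complement r u : 0 <= u <= 1 ->
  hfun (ii r) (complement_path r) u =
  pre_height A lam ii (enum 'I_t) g r u + earlier_height r u.
Proof.
move=> u01; pose F s := g s u * (A (ii r) (ii s))%:~R.
have earlierE : earlier_height r u = - \sum_(s <- enum 'I_t | (s < r)%N) F s.
  rewrite /earlier_height -sumrN; apply: eq_bigr => s sr.
  rewrite /F -(oppr_gcm_offdiag GCM); first by rewrite mulNr mulrC.
  by apply: (ii_neq ii_inj); rewrite ord_neq_ltn sr orbT.
have splitE : \sum_(s <- enum 'I_t | s != r) F s =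
  \sum_(s <- enum 'I_t | (r < s)%N) (A (ii r) (ii s))%:~R * g s u +
  \sum_(s <- enum 'I_t | (s < r)%N) F s.
  rewrite (bigID (fun s => (r < s)%N)) /=; congr (_ + _).
    by apply: eq_big => [s|s _]; [rewrite ord_neq_ltn; case: ltngtP | rewrite mulrC].
  by apply: eq_bigl => s; rewrite ord_neq_ltn; case: ltngtP.
rewrite earlierE /hfun /pairing /complement_path /pi_hw /sroot -/F splitE /pre_height.
ring.
Qed.

Lemma coef_bounds s u : 0 <= u <= 1 -> 0 <= g s u <= (b s)%:R.
Proof. by have [_ _] := monomial_form_coef Hx (mem_enum _ s); apply. Qed.

Lemma earlier_height_le r u : 0 <= u <= 1 -> earlier_height r u <= (earlier_weight r)%:R.
Proof.
move=> u01; rewrite /earlier_weight natr_sum; apply: ler_sum => s _.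
have /andP[g0 gb] := coef_bounds s u01.
by case: (A (ii r) (ii s) != 0); rewrite ?muln1 ?muln0 ?mul1r ?mul0r.
Qed.

(* Since a_(ii s, ii r) = -1, the height of s contains the term [g r u]; all its
   other terms are nonnegative. *)
Lemma coef_le_pre_height r s u : 0 <= u <= 1 -> (s < r)%N -> A (ii s) (ii r) = -1 ->
  g r u <= pre_height A lam ii (enum 'I_t) g s u.
Proof.
move=> /andP[u0 u1] sr Asr.
rewrite /pre_height big_mkcond (bigD1_seq r (mem_enum _ r) (enum_uniq _)) /= sr Asr.
have rest_le0 : \sum_(s' <- enum 'I_t | s' != r)
    (if (s < s')%N then (A (ii s) (ii s'))%:~R * g s' u else 0) <= 0.
  apply: sumr_le0 => s' _; case: ifP => // ss'.
  have /andP[g0 _] : 0 <= g s' u <= (b s')%:R by apply: coef_bounds; rewrite u0 u1.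
  apply: mulr_le0_ge0 => //; apply: (gcm_offdiag_le0 GCM); apply: (ii_neq ii_inj).
  by rewrite ord_neq_ltn ss'.
have : 0 <= (lam (ii s))%:R * u by rewrite mulr_ge0.
rewrite mulrN1z mulN1r; lra.
Qed.

Lemma earlier_height_ge r u : 0 <= u <= 1 ->
  Num.min (Num.min (pre_height A lam ii (enum 'I_t) g r u) (b r)%:R)
    (earlier_weight r)%:R <= earlier_height r u.
Proof.
move=> u01; have [_ _ _ gE] := (proj2 Hx) r (mem_enum _ r); rewrite -gE.
have /andP[gr0 _] := coef_bounds r u01.
rewrite /earlier_weight natr_sum; apply: min_sum_le => // s _ sr.
have [_|Ars_ne] := eqVneq (A (ii r) (ii s)) 0.
  by rewrite /= muln0 mul0r min_r.
have rs : ii r != ii s by apply: (ii_neq ii_inj); rewrite ord_neq_ltn sr orbT.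
have Ars : A (ii r) (ii s) = -1.
  by case: (gcm_offdiag GCM rs) => // Ars; rewrite Ars eqxx in Ars_ne.
have [_ _ _ gsE] := (proj2 Hx) s (mem_enum _ s).
rewrite /= muln1 mul1r gsE; split => //; apply: le_min2 => //.
by apply: coef_le_pre_height; rewrite // (gcm_sym GCM).
Qed.

Lemma sum_earlier_cartan r :
  \sum_(s < t | (s < r)%N) (b s)%:Z * A (ii s) (ii r) = - (earlier_weight r)%:Z.
Proof.
have -> : \sum_(s < t | (s < r)%N) (b s)%:Z * A (ii s) (ii r) =
    \sum_(s <- enum 'I_t | (s < r)%N) (b s)%:Z * A (ii s) (ii r).
  by rewrite big_enum_cond.
rewrite /earlier_weight -natz natr_sum -sumrN; apply: eq_bigr => s sr.
have rs : ii r != ii s by apply: (ii_neq ii_inj); rewrite ord_neq_ltn sr orbT.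
rewrite (gcm_sym GCM) natrM natz.
by case: (gcm_offdiag GCM rs) => ->; rewrite /= ?mulr0 ?oppr0 ?mulrN1 ?mulr1.
Qed.

Lemma epsilon_monomial r :
  epsilon_is A (ii r) x (Num.max 0 ((b r)%:Z - (earlier_weight r)%:Z)).
Proof.
have [HM H0 Hb1 _] := (proj2 Hx) r (mem_enum _ r).
have Aii := gcm_diag GCM (ii r).
have hQ := hfun_complement r.
have G_le := earlier_height_le r.
have G_ge := earlier_height_ge r.
have sh := shifted_complement r.
have [br|br] := leqP (b r) (earlier_weight r).
  rewrite (max_idPl _); last by rewrite subr_le0 lez_nat.
  by exists 0%N; rewrite /epow /= (roote_shifted_None Aii hQ G_ge (leqnn _) br sh).
have {}br := ltnW br.
rewrite (max_idPr _); last by rewrite subr_ge0 lez_nat.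
rewrite subzn //.
by apply: (epsilon_shifted Aii HM H0 Hb1 hQ G_le G_ge); rewrite subnKC.
Qed.

Lemma epsilon_monomial_outside j : (forall r, ii r != j) -> epsilon_is A j x 0.
Proof.
move=> j_out.
have : 0 <= hmin j x.
  apply: hmin_ge => u u01; have /andP[u0 _] := u01.
  rewrite /hfun /pairing (proj1 Hx) // /pi_hw /sroot subr_ge0.
  apply: le_trans (mulr_ge0 u0 (ler0n _ _)).
  apply: sumr_le0 => s _; apply: mulr_ge0_le0; first by case/andP: (coef_bounds s u01).
  by apply: (gcm_offdiag_le0 GCM); rewrite eq_sym.
by move=> hm; exists 0%N; rewrite /epow /= /roote ifT //; lra.
Qed.

End EpsilonOfMonomial.

Theorem mainTheorem4 (R : realType) (I : finType) (A : I -> I -> int)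
  (lam : I -> nat) (t : nat) (ii : 'I_t -> I) (b : 'I_t -> nat)
  (x : lspath I R) :
  simply_laced_symmetrizable_GCM A ->
  injective ii ->
  monomial R A lam ii b = Some x ->
  (forall r : 'I_t,
     epsilon_is A (ii r) x
       (Num.max 0 ((b r)%:Z + \sum_(s < t | (s < r)%N) (b s)%:Z * A (ii s) (ii r))))
  /\ (forall j : I, (forall r : 'I_t, ii r != j) -> epsilon_is A j x 0).
Proof.
move=> GCM ii_inj Hm.
have sorted_enum : sorted (fun r s : 'I_t => (r < s)%N) (enum 'I_t).
  by have := iota_ltn_sorted 0 t; rewrite -val_enum_ord sorted_map.
have [g Hx] := monomial_form_foldr GCM ii_inj sorted_enum Hm.
split=> [r|j j_out]; last exact: (epsilon_monomial_outside GCM Hx).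
by rewrite sum_earlier_cartan //; exact: (epsilon_monomial GCM ii_inj Hx).
Qed.
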